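(* Let $V\in\mathcal C(S^1)$ be odd and let $f\ge0$ be a ($\mathcal C^1$) solution of (TP) with $D=0$ that is time-periodic, i.e. $f(T,\cdot)=f(0,\cdot)$ for some $T>0$ (and $f(t+T,\cdot)=f(t,\cdot)$). Then $f$ is a stationary solution.
   Context: $S^1=\mathbb R/\mathbb Z$; $(V*f)(\theta)=\int_{S^1}V(\theta-\psi)f(\psi)d\psi$. Equation (TP) with $D=0$: $\partial_tf=\partial_\theta((V*f)f)$. *)

From Stdlib Require Import Reals Lra ClassicalEpsilon.
Open Scope R_scope.

(* Functions on S^1 = R/Z are represented as 1-periodic functions R -> R. *)
Definition periodic1 (g : R -> R) : Prop := forall x, g (x + 1) = g x.

(* Integral over [0,1] (one period); equals the Riemann integral whenever
   the integrand is Riemann integrable (which is the case for all integrands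
   appearing below), and 0 otherwise. *)
Definition RInt01 (g : R -> R) : R :=
  match excluded_middle_informative
          (exists _ : Riemann_integrable g 0 1, True) with
  | left H => RiemannInt (proj1_sig (constructive_indefinite_description _ H))
  | right _ => 0
  end.

Definition conv (V g : R -> R) (theta : R) : R :=
  RInt01 (fun psi => V (theta - psi) * g psi).

Definition continuous2 (g : R -> R -> R) : Prop :=
  forall t x eps, 0 < eps -> exists delta, 0 < delta /\
    forall s y, Rabs (s - t) < delta -> Rabs (y - x) < delta ->
      Rabs (g s y - g t x) < eps.

Definition C1_with_partials (f ft fx : R -> R -> R) : Prop :=
  continuous2 f /\ continuous2 ft /\ continuous2 fx /\
  (forall t x, derivable_pt_lim (fun s => f s x) t (ft t x)) /\
  (forall t x, derivable_pt_lim (fun y => f t y) x (fx t x)).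

Definition solves_TP0 (V : R -> R) (f ft : R -> R -> R) : Prop :=
  forall t x,
    derivable_pt_lim (fun y => conv V (f t) y * f t y) x (ft t x).

From Stdlib Require Import Reals Lra ZArith Lia FunctionalExtensionality ClassicalEpsilon.
From Coquelicot Require Import Coquelicot.
Open Scope R_scope.

(** Proof (energy method).  Let [W] be the primitive of [V] vanishing at 0;
    since [V] is odd and 1-periodic, [W] is even and 1-periodic.  For the
    interaction energy [E(t) = RInt_0^1 f (W * f)], self-adjointness of the
    convolution by the even kernel [W] and an integration by parts (the flux
    [u = (V * f) f] is periodic, and [(W * f)' = V * f]) give
      [E'(t) = 2 RInt d_t f (W * f) = -2 RInt u (V * f) = -2 RInt f (V * f)^2].
    As [f >= 0], [E] is nonincreasing; being also [T]-periodic it is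
    constant, so the dissipation [RInt f (V * f)^2] vanishes.  Its integrand
    being continuous and nonnegative, [u^2 = f * (f (V * f)^2) = 0], hence
    [d_t f = d_x u = 0]. *)

(** R-valued instances of the linearity of [RInt] (the generic lemmas state
    them with the module operations [plus]/[scal], which do not match
    syntactically on [R]). *)
Lemma RInt_plus_R (g h : R -> R) a b : ex_RInt g a b -> ex_RInt h a b ->
  RInt (fun x => g x + h x) a b = RInt g a b + RInt h a b.
Proof. intros; apply (RInt_plus (V:=R_CompleteNormedModule)); auto. Qed.

Lemma RInt_scal_R (g : R -> R) a b l : ex_RInt g a b ->
  RInt (fun x => l * g x) a b = l * RInt g a b.
Proof. intros; apply (RInt_scal (V:=R_CompleteNormedModule)); auto. Qed.

Lemma ex_RInt_of_continuous (g : R -> R) a b :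
  (forall x, continuous g x) -> ex_RInt g a b.
Proof. intros H; apply (ex_RInt_continuous (V:=R_CompleteNormedModule)); auto. Qed.

Lemma continuous_eps_delta (g : R -> R) x :
  continuous g x <-> forall eps, 0 < eps -> exists d, 0 < d /\
    forall z, Rabs (z - x) < d -> Rabs (g z - g x) < eps.
Proof.
  split.
  - intros H%continuity_pt_filterlim eps Heps. destruct (H eps Heps) as [d [Hd H2]].
    exists d; split; auto. intros z Hz. destruct (Req_dec x z) as [<-|Hne].
    + rewrite Rminus_eq_0, Rabs_R0; auto.
    + apply (H2 z). split; [split; [exact I | exact Hne] | exact Hz].
  - intros H. apply continuity_pt_filterlim. intros eps Heps.
    destruct (H eps Heps) as [d [Hd H2]].
    exists d; split; auto. intros z [_ Hz]. apply H2. exact Hz.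
Qed.

Lemma continuity_2d_pt_of_continuous2 (g : R -> R -> R) :
  continuous2 g -> forall s y, continuity_2d_pt g s y.
Proof.
  intros H s y eps. destruct (H s y eps (cond_pos eps)) as [d [Hd H2]].
  exists (mkposreal d Hd). intros u v Hu Hv. apply H2; auto.
Qed.

Lemma continuity_2d_pt_slice1 (g : R -> R -> R) s y :
  continuity_2d_pt g s y -> continuous (fun z => g z y) s.
Proof.
  intros H. apply continuous_eps_delta. intros eps Heps.
  destruct (H (mkposreal eps Heps)) as [d H2].
  exists d; split; [apply cond_pos|]. intros z Hz. apply H2; auto.
  rewrite Rminus_eq_0, Rabs_R0. apply cond_pos.
Qed.

Lemma continuity_2d_pt_slice2 (g : R -> R -> R) s y :
  continuity_2d_pt g s y -> continuous (fun z => g s z) y.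
Proof.
  intros H. apply continuous_eps_delta. intros eps Heps.
  destruct (H (mkposreal eps Heps)) as [d H2].
  exists d; split; [apply cond_pos|]. intros z Hz. apply H2; auto.
  rewrite Rminus_eq_0, Rabs_R0. apply cond_pos.
Qed.

Lemma continuity_2d_pt_swap (g : R -> R -> R) s y :
  continuity_2d_pt g s y -> continuity_2d_pt (fun u v => g v u) y s.
Proof. intros H eps. destruct (H eps) as [d H2]. exists d. intros u v Hu Hv. apply H2; auto. Qed.

Lemma continuity_2d_pt_fst (g : R -> R) : (forall x, continuous g x) ->
  forall x y, continuity_2d_pt (fun u v => g u) x y.
Proof.
  intros Hg x y. apply (continuity_1d_2d_pt_comp g (fun u v => u)).
  - apply continuity_pt_filterlim, Hg.
  - apply continuity_2d_pt_id1.
Qed.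

Lemma continuity_2d_pt_snd (g : R -> R) : (forall x, continuous g x) ->
  forall x y, continuity_2d_pt (fun u v => g v) x y.
Proof.
  intros Hg x y. apply (continuity_1d_2d_pt_comp g (fun u v => v)).
  - apply continuity_pt_filterlim, Hg.
  - apply continuity_2d_pt_id2.
Qed.

Lemma continuity_2d_pt_diff (K : R -> R) : (forall x, continuous K x) ->
  forall x y, continuity_2d_pt (fun u v => K (u - v)) x y.
Proof.
  intros HK x y. apply (continuity_1d_2d_pt_comp K (fun u v => u - v)).
  - apply continuity_pt_filterlim, HK.
  - apply continuity_2d_pt_minus; [apply continuity_2d_pt_id1 | apply continuity_2d_pt_id2].
Qed.

(** Continuity of an integral with respect to a parameter, for a jointly
    continuous integrand on a compact interval (uniform continuity). *)
Lemma RInt_param_continuous_le (h : R -> R -> R) a b : a <= b ->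
  (forall p x, continuity_2d_pt h p x) ->
  forall p, continuous (fun p => RInt (h p) a b) p.
Proof.
  intros Hab Hh p. apply continuous_eps_delta. intros eps Heps.
  set (e := eps / (b - a + 1)).
  assert (He : 0 < e) by (unfold e; apply Rdiv_lt_0_compat; lra).
  destruct (uniform_continuity_2d_1d' h a b p (fun x _ => Hh p x) (mkposreal e He))
    as [d Hd].
  exists d; split; [apply cond_pos|]. intros z Hz.
  assert (Ex : forall q, ex_RInt (h q) a b).
  { intros q. apply ex_RInt_of_continuous. intros w. apply continuity_2d_pt_slice2, Hh. }
  rewrite <- (RInt_minus (V:=R_CompleteNormedModule)) by auto.
  eapply Rle_lt_trans.
  - apply (abs_RInt_le_const _ a b e); auto.
    + apply (ex_RInt_minus (V:=R_CompleteNormedModule)); auto.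
    + intros t Ht. left. apply (Hd t p t z); try lra.
      * split; apply Rlt_le; apply Rabs_lt_between'; rewrite Rminus_eq_0, Rabs_R0; apply cond_pos.
      * split; apply Rabs_le_between'; left; auto.
      * rewrite Rminus_eq_0, Rabs_R0; apply cond_pos.
  - unfold e. apply (Rmult_lt_reg_r (b - a + 1)); [lra|].
    replace ((b - a) * (eps / (b - a + 1)) * (b - a + 1)) with ((b - a) * eps)
      by (field; lra). nra.
Qed.

Lemma RInt_param_continuous (h : R -> R -> R) a b :
  (forall p x, continuity_2d_pt h p x) ->
  forall p, continuous (fun p => RInt (h p) a b) p.
Proof.
  intros Hh p. destruct (Rle_dec a b) as [Hab|Hab].
  - apply RInt_param_continuous_le; auto.
  - apply (continuous_ext (fun p => - RInt (h p) b a)).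
    + intros q. rewrite <- (opp_RInt_swap (V:=R_CompleteNormedModule)).
      * unfold opp; simpl. ring.
      * apply ex_RInt_of_continuous. intros w. apply continuity_2d_pt_slice2, Hh.
    + apply (continuous_opp (V:=R_NormedModule)), RInt_param_continuous_le; auto; lra.
Qed.

Lemma derive_zero_constant (F : R -> R) :
  (forall x, is_derive F x 0) -> forall a b, F b = F a.
Proof.
  intros H a b.
  assert (HF : is_RInt (fun _ => 0) a b (minus (F b) (F a))).
  { apply (is_RInt_derive (V:=R_CompleteNormedModule) F (fun _ => 0)).
    - intros; apply H.
    - intros; apply continuous_const. }
  apply (is_RInt_unique (V:=R_CompleteNormedModule)) in HF.
  rewrite RInt_const in HF. unfold minus, plus, opp, scal, mult in HF; simpl in HF.
  unfold mult in HF; simpl in HF. lra.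
Qed.

Lemma nonincreasing_of_derive_nonpos (F F' : R -> R) :
  (forall x, is_derive F x (F' x)) -> (forall x, F' x <= 0) ->
  forall a b, a <= b -> F b <= F a.
Proof.
  intros HF HF' a b Hab.
  destruct (MVT_gen F a b F') as [c [_ Hc]].
  - intros; apply HF.
  - intros x _. apply continuity_pt_filterlim.
    apply (ex_derive_continuous (K:=R_AbsRing) (V:=R_NormedModule)). eexists; apply HF.
  - specialize (HF' c). nra.
Qed.

(** A nonincreasing [T]-periodic function is locally constant, hence has
    zero derivative. *)
Lemma derive_periodic_nonincreasing (F : R -> R) (T t l : R) : 0 < T ->
  (forall s, F (s + T) = F s) -> (forall a b, a <= b -> F b <= F a) ->
  is_derive F t l -> l = 0.
Proof.
  intros HT Hper Hmono Hd.
  assert (Hloc : is_derive F t 0).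
  { apply (is_derive_ext_loc (fun _ => F t)).
    - exists (mkposreal T HT). intros y Hy.
      assert (Hy' : Rabs (y - t) < T) by exact Hy.
      apply Rabs_lt_between' in Hy'.
      destruct (Rle_dec y t).
      + assert (E := Hper (t - T)). replace (t - T + T) with t in E by ring.
        assert (M1 := Hmono (t - T) y ltac:(lra)). assert (M2 := Hmono y t ltac:(lra)). lra.
      + assert (E := Hper t).
        assert (M1 := Hmono t y ltac:(lra)). assert (M2 := Hmono y (t + T) ltac:(lra)). lra.
    - apply (is_derive_const (K:=R_AbsRing) (V:=R_NormedModule)). }
  apply is_derive_unique in Hd. apply is_derive_unique in Hloc. congruence.
Qed.

Lemma is_derive_RInt_upper (G : R -> R) a : (forall x, continuous G x) ->
  forall s, is_derive (fun s => RInt G a s) s (G s).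
Proof.
  intros HG s. apply (is_derive_RInt (V:=R_NormedModule) G (RInt G a) a s).
  - apply filter_forall. intros b. apply (RInt_correct (V:=R_CompleteNormedModule)).
    apply ex_RInt_of_continuous; auto.
  - apply HG.
Qed.

(** The derivative of a 1-periodic [C^1] function has zero integral over a
    period (used for integrations by parts without boundary terms). *)
Lemma RInt_derive_periodic (P dP : R -> R) :
  (forall x, is_derive P x (dP x)) -> (forall x, continuous dP x) ->
  periodic1 P -> RInt dP 0 1 = 0.
Proof.
  intros H1 H2 Hp.
  rewrite (is_RInt_unique (V:=R_CompleteNormedModule) dP 0 1 (minus (P 1) (P 0))).
  - unfold minus, plus, opp; simpl. replace 1 with (0 + 1) by ring. rewrite Hp. ring.
  - apply (is_RInt_derive (V:=R_CompleteNormedModule)); intros; auto.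
Qed.

(** Fubini's theorem on the unit square for jointly continuous integrands:
    both iterated integrals have the same derivative in the upper bound. *)
Lemma fubini_unit_square (g : R -> R -> R) : (forall x y, continuity_2d_pt g x y) ->
  RInt (fun x => RInt (fun y => g x y) 0 1) 0 1
  = RInt (fun y => RInt (fun x => g x y) 0 1) 0 1.
Proof.
  intros Hg.
  set (G := fun x => RInt (fun y => g x y) 0 1).
  assert (HG : forall x, continuous G x)
    by (intros; apply RInt_param_continuous; auto).
  assert (Hgx : forall y x, continuous (fun x => g x y) x)
    by (intros; apply continuity_2d_pt_slice1, Hg).
  set (F := fun s => RInt G 0 s - RInt (fun y => RInt (fun x => g x y) 0 s) 0 1).
  assert (HF : forall s, is_derive F s 0).
  { intros s. replace 0 with (G s - G s) by ring.
    apply (is_derive_minus (K:=R_AbsRing) (V:=R_NormedModule)).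
    - apply is_derive_RInt_upper; auto.
    - assert (Hd : forall u v, Derive (fun z => RInt (fun x => g x v) 0 z) u = g u v).
      { intros u v. refine (Derive_RInt (fun x => g x v) 0 u _ _); [|apply Hgx].
        apply filter_forall. intros; apply ex_RInt_of_continuous; auto. }
      unfold G. rewrite (RInt_ext _ (fun v => Derive (fun z => RInt (fun x => g x v) 0 z) s))
        by (intros; rewrite Hd; auto).
      apply (is_derive_RInt_param (fun z v => RInt (fun x => g x v) 0 z)).
      + apply filter_forall. intros x0 v _. eexists. apply is_derive_RInt_upper; auto.
      + intros v _. apply continuity_2d_pt_ext with (f := g).
        * intros; rewrite Hd; auto.
        * apply Hg.
      + apply filter_forall. intros z. apply ex_RInt_of_continuous. intros p.
        apply (RInt_param_continuous (fun p x => g x p)).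
        intros; apply continuity_2d_pt_swap, Hg. }
  assert (E := derive_zero_constant F HF 0 1). unfold F in E.
  rewrite !RInt_point in E.
  rewrite (RInt_ext (fun y => RInt (fun x => g x y) 0 0) (fun _ => 0)) in E
    by (intros; apply (RInt_point (V:=R_CompleteNormedModule))).
  rewrite RInt_const in E. unfold G in E.
  unfold zero, scal, mult in E; simpl in E. unfold mult in E; simpl in E.
  apply Rminus_diag_uniq. unfold G. rewrite E. ring.
Qed.

Lemma RInt_nonneg_zero (h : R -> R) : (forall x, continuous h x) ->
  (forall x, 0 <= x <= 1 -> 0 <= h x) -> RInt h 0 1 = 0 ->
  forall x, 0 <= x <= 1 -> h x = 0.
Proof.
  intros Hc Hp Hi x0 Hx0.
  destruct (Rle_lt_or_eq_dec 0 (h x0) (Hp x0 Hx0)) as [Hlt|]; auto. exfalso.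
  destruct (proj1 (continuous_eps_delta h x0) (Hc x0) (h x0 / 2) ltac:(lra))
    as [d [Hd Hnear]].
  set (a := Rmax 0 (x0 - d/2)). set (b := Rmin 1 (x0 + d/2)).
  assert (Ha : 0 <= a /\ x0 - d/2 <= a /\ a <= x0 /\ (a = 0 \/ a = x0 - d/2))
    by (unfold a, Rmax; destruct Rle_dec; lra).
  assert (Hb : b <= 1 /\ b <= x0 + d/2 /\ x0 <= b /\ (b = 1 \/ b = x0 + d/2))
    by (unfold b, Rmin; destruct Rle_dec; lra).
  assert (Hab : a < b)
    by (destruct Ha as [? [? [? [Ha|Ha]]]]; destruct Hb as [? [? [? [Hb|Hb]]]]; lra).
  assert (Ex : forall u v, ex_RInt h u v) by (intros; apply ex_RInt_of_continuous; auto).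
  assert (I1 : 0 <= RInt h 0 a) by (apply RInt_ge_0; auto; try lra; intros; apply Hp; lra).
  assert (I3 : 0 <= RInt h b 1) by (apply RInt_ge_0; auto; try lra; intros; apply Hp; lra).
  assert (I2 : 0 < RInt h a b).
  { apply RInt_gt_0; auto. intros y Hy.
    assert (Hy' : Rabs (y - x0) < d) by (apply Rabs_def1; lra).
    specialize (Hnear y Hy'). apply Rabs_def2 in Hnear. lra. }
  assert (C1 := RInt_Chasles (V:=R_CompleteNormedModule) h 0 a 1 (Ex _ _) (Ex _ _)).
  assert (C2 := RInt_Chasles (V:=R_CompleteNormedModule) h a b 1 (Ex _ _) (Ex _ _)).
  simpl in C1, C2. unfold plus in C1, C2; simpl in C1, C2. lra.
Qed.

Lemma periodic1_nat (g : R -> R) : periodic1 g -> forall n x, g (x + INR n) = g x.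
Proof.
  intros Hg n. induction n as [|n IH]; intros x.
  - simpl. rewrite Rplus_0_r; auto.
  - rewrite S_INR. replace (x + (INR n + 1)) with ((x + INR n) + 1) by ring.
    rewrite Hg; auto.
Qed.

Lemma periodic1_Z (g : R -> R) : periodic1 g -> forall k x, g (x + IZR k) = g x.
Proof.
  intros Hg k x. destruct (Z_le_gt_dec 0 k) as [Hk|Hk].
  - rewrite <- (Z2Nat.id k Hk), <- INR_IZR_INZ. apply periodic1_nat; auto.
  - replace k with (- Z.of_nat (Z.to_nat (- k)))%Z by (rewrite Z2Nat.id; lia).
    rewrite opp_IZR, <- INR_IZR_INZ.
    rewrite <- (periodic1_nat g Hg (Z.to_nat (- k)) (x + - INR (Z.to_nat (- k)))).
    f_equal. ring.
Qed.

Lemma periodic1_reduce (g : R -> R) : periodic1 g ->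
  forall x, exists y, 0 <= y <= 1 /\ g x = g y.
Proof.
  intros Hg x. destruct (archimed x) as [H1 H2].
  exists (x + IZR (1 - up x)). split.
  - rewrite minus_IZR. lra.
  - rewrite periodic1_Z; auto.
Qed.

Lemma periodic1_bounded (g : R -> R) : (forall x, continuous g x) -> periodic1 g ->
  exists M, forall z, Rabs (g z) <= M.
Proof.
  intros Hc Hp.
  destruct (continuity_ab_maj (fun z => Rabs (g z)) 0 1 ltac:(lra)) as [m [Hm _]].
  - intros c _. apply continuity_pt_filterlim.
    apply (continuous_comp g Rabs); [apply Hc | apply continuous_Rabs].
  - exists (Rabs (g m)). intros z. destruct (periodic1_reduce g Hp z) as [y [Hy ->]].
    apply Hm; auto.
Qed.

Lemma is_derive_shift (F F' : R -> R) c x : (forall z, is_derive F z (F' z)) ->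
  is_derive (fun z => F (z - c)) x (F' (x - c)).
Proof.
  intros HF.
  assert (Hlin : is_derive (fun z : R => z - c) x 1).
  { apply is_derive_Reals. replace 1 with (1 - 0) by ring.
    apply derivable_pt_lim_minus; [apply derivable_pt_lim_id | apply derivable_pt_lim_const]. }
  assert (H := is_derive_comp (K:=R_AbsRing) (V:=R_NormedModule) F _ x _ _ (HF _) Hlin).
  unfold scal in H; simpl in H; unfold mult in H; simpl in H.
  rewrite Rmult_1_l in H. exact H.
Qed.

Lemma is_derive_reflect (F F' : R -> R) c x : (forall z, is_derive F z (F' z)) ->
  is_derive (fun z => F (c - z)) x (- F' (c - x)).
Proof.
  intros HF.
  assert (Hlin : is_derive (fun z : R => c - z) x (-1)).
  { apply is_derive_Reals. replace (-1) with (0 - 1) by ring.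
    apply derivable_pt_lim_minus; [apply derivable_pt_lim_const | apply derivable_pt_lim_id]. }
  assert (H := is_derive_comp (K:=R_AbsRing) (V:=R_NormedModule) F _ x _ _ (HF _) Hlin).
  unfold scal in H; simpl in H; unfold mult in H; simpl in H.
  replace (- F' (c - x)) with (-1 * F' (c - x)) by ring. exact H.
Qed.

(** The primitive [W] of the interaction kernel [V] vanishing at 0.  For
    [V] odd, continuous and 1-periodic, [W] is even and 1-periodic (the
    mean of [V] over a period is zero). *)
Definition primitive (V : R -> R) (x : R) : R := RInt V 0 x.

Section Primitive.
Variable V : R -> R.
Hypothesis hVc : forall x, continuous V x.

Lemma primitive_derive x : is_derive (primitive V) x (V x).
Proof. apply is_derive_RInt_upper; auto. Qed.

Lemma primitive_continuous x : continuous (primitive V) x.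
Proof.
  apply (ex_derive_continuous (K:=R_AbsRing) (V:=R_NormedModule)).
  eexists; apply primitive_derive.
Qed.

Hypothesis hVodd : forall x, V (- x) = - V x.

Lemma primitive_even x : primitive V (- x) = primitive V x.
Proof.
  set (h := fun x => primitive V (0 - x) - primitive V x).
  assert (Hh : forall x, is_derive h x 0).
  { intros z. replace 0 with (- V (0 - z) - V z)
      by (replace (0 - z) with (- z) by ring; rewrite hVodd; ring).
    apply (is_derive_minus (K:=R_AbsRing) (V:=R_NormedModule)).
    - apply (is_derive_reflect (primitive V) V 0 z primitive_derive).
    - apply primitive_derive. }
  assert (E := derive_zero_constant h Hh 0 x). unfold h in E.
  replace (0 - x) with (- x) in E by ring. replace (0 - 0) with 0 in E by ring. lra.
Qed.

Hypothesis hVp : periodic1 V.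

Lemma primitive_periodic : periodic1 (primitive V).
Proof.
  set (h := fun x => primitive V (x - -1) - primitive V x).
  assert (Hh : forall x, is_derive h x 0).
  { intros z. replace 0 with (V (z - -1) - V z)
      by (replace (z - -1) with (z + 1) by ring; rewrite hVp; ring).
    apply (is_derive_minus (K:=R_AbsRing) (V:=R_NormedModule)).
    - apply (is_derive_shift (primitive V) V (-1) z primitive_derive).
    - apply primitive_derive. }
  assert (W0 : primitive V 0 = 0) by apply (RInt_point (V:=R_CompleteNormedModule)).
  (* [h] is constant, so [W 1 - W 0 = h 0 = h (-1) = W 0 - W (-1) = - W 1]. *)
  assert (E1 := derive_zero_constant h Hh 0 (-1)). unfold h in E1.
  replace (-1 - -1) with 0 in E1 by ring. replace (0 - -1) with 1 in E1 by ring.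
  assert (E2 := primitive_even 1). replace (- (1)) with (-1) in E2 by ring.
  intros x. assert (E := derive_zero_constant h Hh 0 x). unfold h in E.
  replace (x - -1) with (x + 1) in E by ring. replace (0 - -1) with 1 in E by ring. lra.
Qed.
End Primitive.

Definition pconv (K g : R -> R) (x : R) : R := RInt (fun y => K (x - y) * g y) 0 1.

Section Convolution.
Variable K : R -> R.
Hypothesis hK : forall x, continuous K x.

Lemma pconv_integrand_continuous (g : R -> R) : (forall x, continuous g x) ->
  forall x y, continuity_2d_pt (fun x y => K (x - y) * g y) x y.
Proof.
  intros Hg x y. apply continuity_2d_pt_mult.
  - apply continuity_2d_pt_diff; auto.
  - apply continuity_2d_pt_snd; auto.
Qed.

Lemma pconv_ex_RInt (g : R -> R) x : (forall x, continuous g x) ->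
  ex_RInt (fun y => K (x - y) * g y) 0 1.
Proof.
  intros Hg. apply ex_RInt_of_continuous. intros y.
  apply (continuity_2d_pt_slice2 (fun x y => K (x - y) * g y)).
  apply pconv_integrand_continuous; auto.
Qed.

Lemma pconv_continuous (g : R -> R) : (forall x, continuous g x) ->
  forall x, continuous (pconv K g) x.
Proof.
  intros Hg. apply (RInt_param_continuous (fun x y => K (x - y) * g y)).
  apply pconv_integrand_continuous; auto.
Qed.

Lemma pconv_periodic (g : R -> R) : periodic1 K -> periodic1 (pconv K g).
Proof.
  intros HK x. apply RInt_ext. intros y _.
  replace (x + 1 - y) with ((x - y) + 1) by ring. rewrite HK. auto.
Qed.

Lemma pconv_derive (K' g : R -> R) : (forall x, continuous K' x) ->
  (forall z, is_derive K z (K' z)) -> (forall x, continuous g x) ->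
  forall x, is_derive (pconv K g) x (pconv K' g x).
Proof.
  intros HK' HKd Hg x.
  assert (Hd : forall z y, is_derive (fun z => K (z - y) * g y) z (K' (z - y) * g y)).
  { intros z y. apply is_derive_Reals, derivable_pt_lim_scal_right, is_derive_Reals.
    apply is_derive_shift; auto. }
  unfold pconv at 2. rewrite (RInt_ext _ (fun y => Derive (fun z => K (z - y) * g y) x))
    by (intros y _; symmetry; apply is_derive_unique, Hd).
  apply (is_derive_RInt_param (fun z y => K (z - y) * g y)).
  - apply filter_forall. intros z y _. eexists; apply Hd.
  - intros y _. apply continuity_2d_pt_ext with (f := fun u v => K' (u - v) * g v).
    + intros; symmetry; apply is_derive_unique, Hd.
    + apply continuity_2d_pt_mult;
        [apply continuity_2d_pt_diff | apply continuity_2d_pt_snd]; auto.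
  - apply filter_forall. intros z. apply pconv_ex_RInt; auto.
Qed.

Lemma pconv_derive_param (g gs : R -> R -> R) x s :
  (forall s y, continuity_2d_pt g s y) -> (forall s y, continuity_2d_pt gs s y) ->
  (forall s y, is_derive (fun s => g s y) s (gs s y)) ->
  is_derive (fun s => pconv K (g s) x) s (pconv K (gs s) x).
Proof.
  intros Hg Hgs Hgd.
  assert (Hkx : forall y, continuous (fun y => K (x - y)) y).
  { intros y. apply (continuity_2d_pt_slice2 (fun u v => K (u - v))).
    apply continuity_2d_pt_diff; auto. }
  assert (Hd : forall z y, is_derive (fun z => K (x - y) * g z y) z (K (x - y) * gs z y)).
  { intros z y. apply is_derive_Reals, derivable_pt_lim_scal, is_derive_Reals, Hgd. }
  unfold pconv at 2. rewrite (RInt_ext _ (fun y => Derive (fun z => K (x - y) * g z y) s))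
    by (intros y _; symmetry; apply is_derive_unique, Hd).
  apply (is_derive_RInt_param (fun z y => K (x - y) * g z y)).
  - apply filter_forall. intros z y _. eexists; apply Hd.
  - intros y _. apply continuity_2d_pt_ext with (f := fun u v => K (x - v) * gs u v).
    + intros; symmetry; apply is_derive_unique, Hd.
    + apply continuity_2d_pt_mult; auto. apply (continuity_2d_pt_snd (fun v => K (x - v))); auto.
  - apply filter_forall. intros z. apply ex_RInt_of_continuous. intros y.
    apply (continuous_mult (K:=R_AbsRing)); auto. apply continuity_2d_pt_slice2; auto.
Qed.

Lemma pconv_sup_bound (g1 g2 : R -> R) M eta v :
  (forall x, continuous g1 x) -> (forall x, continuous g2 x) ->
  (forall z, Rabs (K z) <= M) -> (forall y, 0 <= y <= 1 -> Rabs (g1 y - g2 y) <= eta) ->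
  Rabs (pconv K g1 v - pconv K g2 v) <= M * eta.
Proof.
  intros Hg1 Hg2 HM Heta. unfold pconv.
  rewrite <- (RInt_minus (V:=R_CompleteNormedModule)) by (apply pconv_ex_RInt; auto).
  replace (M * eta) with ((1 - 0) * (M * eta)) by ring.
  apply abs_RInt_le_const; [lra | |].
  - apply (ex_RInt_minus (V:=R_CompleteNormedModule)); apply pconv_ex_RInt; auto.
  - intros y Hy. unfold minus, plus, opp; simpl.
    replace (K (v - y) * g1 y + - (K (v - y) * g2 y)) with (K (v - y) * (g1 y - g2 y))
      by ring.
    rewrite Rabs_mult. apply Rmult_le_compat; try apply Rabs_pos; auto.
Qed.

(** For a bounded kernel, [(s, x) |-> (K * g s)(x)] is jointly continuous:
    continuity in [x] at fixed [s], plus uniform continuity of [g] in [s]. *)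
Lemma pconv_joint_continuous (g : R -> R -> R) M :
  (forall z, Rabs (K z) <= M) -> (forall s y, continuity_2d_pt g s y) ->
  forall s x, continuity_2d_pt (fun s x => pconv K (g s) x) s x.
Proof.
  intros HM Hg s x [eps Heps].
  assert (HM0 : 0 <= M) by (eapply Rle_trans; [apply Rabs_pos | apply (HM 0)]).
  assert (Hslice : forall s y, continuous (g s) y)
    by (intros; apply continuity_2d_pt_slice2, Hg).
  destruct (proj1 (continuous_eps_delta _ x) (pconv_continuous (g s) (Hslice s) x) (eps / 2)
              ltac:(lra)) as [d1 [Hd1 Hnear_x]].
  set (eta := eps / (2 * (M + 1))).
  assert (Heta : 0 < eta) by (unfold eta; apply Rdiv_lt_0_compat; lra).
  destruct (uniform_continuity_2d_1d' g 0 1 s (fun x _ => Hg s x) (mkposreal eta Heta))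
    as [d2 Hnear_s].
  assert (Hd : 0 < Rmin d1 d2) by (apply Rmin_pos; [lra | apply cond_pos]).
  exists (mkposreal _ Hd). simpl. intros u v Hu Hv.
  assert (Hv1 : Rabs (v - x) < d1) by (eapply Rlt_le_trans; [apply Hv | apply Rmin_l]).
  assert (Hu2 : Rabs (u - s) < d2) by (eapply Rlt_le_trans; [apply Hu | apply Rmin_r]).
  assert (Hdiff : Rabs (pconv K (g u) v - pconv K (g s) v) <= M * eta).
  { apply pconv_sup_bound; auto. intros y Hy. left. apply (Hnear_s y s y u); try lra.
    - split; apply Rlt_le; apply Rabs_lt_between'; rewrite Rminus_eq_0, Rabs_R0;
        apply cond_pos.
    - split; apply Rabs_le_between'; left; auto.
    - rewrite Rminus_eq_0, Rabs_R0; apply cond_pos. }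
  assert (Hsmall : M * eta < eps / 2).
  { unfold eta. replace (M * (eps / (2 * (M + 1)))) with (eps / 2 - eps / (2 * (M + 1)))
      by (field; lra).
    assert (0 < eps / (2 * (M + 1))) by (apply Rdiv_lt_0_compat; lra). lra. }
  specialize (Hnear_x v Hv1).
  replace (pconv K (g u) v - pconv K (g s) x)
    with ((pconv K (g u) v - pconv K (g s) v) + (pconv K (g s) v - pconv K (g s) x)) by ring.
  eapply Rle_lt_trans; [apply Rabs_triang |]. simpl. lra.
Qed.

(** For an even kernel, convolution is self-adjoint on [L^2(S^1)]:
    [RInt g (K * h) = RInt h (K * g)] (Fubini). *)
Lemma pconv_symmetric (g h : R -> R) : (forall x, K (- x) = K x) ->
  (forall x, continuous g x) -> (forall x, continuous h x) ->
  RInt (fun x => g x * pconv K h x) 0 1 = RInt (fun y => h y * pconv K g y) 0 1.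
Proof.
  intros Heven Hg Hh.
  rewrite (RInt_ext (fun x => g x * pconv K h x)
             (fun x => RInt (fun y => g x * (K (x - y) * h y)) 0 1))
    by (intros x _; unfold pconv; rewrite RInt_scal_R; auto; apply pconv_ex_RInt; auto).
  rewrite fubini_unit_square.
  - apply RInt_ext. intros y _.
    rewrite (RInt_ext (fun x => g x * (K (x - y) * h y)) (fun x => h y * (K (y - x) * g x)))
      by (intros x _; rewrite <- (Heven (y - x)), Ropp_minus_distr; simpl; ring).
    rewrite RInt_scal_R; auto. apply pconv_ex_RInt; auto.
  - intros x y. apply continuity_2d_pt_mult.
    + apply continuity_2d_pt_fst; auto.
    + apply pconv_integrand_continuous; auto.
Qed.
End Convolution.

Section Energy.
Variables (V : R -> R) (f ft : R -> R -> R).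
Hypothesis hVc : forall x, continuous V x.
Hypothesis hVp : periodic1 V.
Hypothesis hVodd : forall x, V (- x) = - V x.
Hypothesis hfp : forall t, periodic1 (f t).
Hypothesis hf : forall s y, continuity_2d_pt f s y.
Hypothesis hft : forall s y, continuity_2d_pt ft s y.
Hypothesis hfd : forall s y, is_derive (fun s => f s y) s (ft s y).

Definition flux (t x : R) : R := pconv V (f t) x * f t x.

Hypothesis hsol : forall t x, is_derive (flux t) x (ft t x).

Definition energy (t : R) : R := RInt (fun x => f t x * pconv (primitive V) (f t) x) 0 1.

Definition dissipation (t : R) : R := RInt (fun x => f t x * (pconv V (f t) x) ^ 2) 0 1.

Let W := primitive V.

Lemma f_continuous t x : continuous (f t) x.
Proof. apply continuity_2d_pt_slice2; auto. Qed.

Lemma ft_continuous t x : continuous (ft t) x.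
Proof. apply continuity_2d_pt_slice2; auto. Qed.

Lemma W_continuous x : continuous W x.
Proof. apply primitive_continuous; auto. Qed.

Lemma flux_continuous t x : continuous (flux t) x.
Proof.
  apply (continuous_mult (K:=R_AbsRing));
    [apply pconv_continuous; auto; apply f_continuous | apply f_continuous].
Qed.

Lemma flux_periodic t : periodic1 (flux t).
Proof. intros x. unfold flux. rewrite pconv_periodic, hfp; auto. Qed.

(** Integration by parts over a period: [RInt d_t f (W * f) = - D(t)]. *)
Lemma transport_identity t :
  RInt (fun x => ft t x * pconv W (f t) x) 0 1 = - dissipation t.
Proof.
  assert (HWf : forall x, continuous (pconv W (f t)) x)
    by (apply pconv_continuous; [apply W_continuous | apply f_continuous]).
  assert (HVf : forall x, continuous (pconv V (f t)) x)
    by (apply pconv_continuous; auto; apply f_continuous).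
  assert (Hparts : RInt (fun x => ft t x * pconv W (f t) x
                               + flux t x * pconv V (f t) x) 0 1 = 0).
  { apply (RInt_derive_periodic (fun x => flux t x * pconv W (f t) x)).
    - intros x. apply is_derive_Reals, derivable_pt_lim_mult; apply is_derive_Reals; auto.
      apply (pconv_derive W W_continuous V (f t) hVc (primitive_derive V hVc) (f_continuous t)).
    - intros x. apply (continuous_plus (V:=R_NormedModule));
        apply (continuous_mult (K:=R_AbsRing)); auto using ft_continuous, flux_continuous.
    - intros x. rewrite flux_periodic, pconv_periodic; auto.
      apply primitive_periodic; auto. }
  rewrite RInt_plus_R in Hparts.
  - unfold dissipation. rewrite (RInt_ext (fun x => f t x * (pconv V (f t) x) ^ 2)
                                  (fun x => flux t x * pconv V (f t) x))
      by (intros; unfold flux; simpl; ring).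
    lra.
  - apply ex_RInt_of_continuous. intros x.
    apply (continuous_mult (K:=R_AbsRing)); auto using ft_continuous.
  - apply ex_RInt_of_continuous. intros x.
    apply (continuous_mult (K:=R_AbsRing)); auto using flux_continuous.
Qed.

(** [W] is bounded, so [(s, x) |-> (W * g s)(x)] is jointly continuous. *)
Lemma W_pconv_joint_continuous (g : R -> R -> R) :
  (forall s y, continuity_2d_pt g s y) ->
  forall s x, continuity_2d_pt (fun s x => pconv W (g s) x) s x.
Proof.
  intros Hg.
  destruct (periodic1_bounded W W_continuous (primitive_periodic V hVc hVodd hVp))
    as [M HM].
  apply (pconv_joint_continuous W W_continuous g M); auto.
Qed.

Lemma energy_derive_under_integral t : is_derive energy t
  (RInt (fun x => ft t x * pconv W (f t) x + f t x * pconv W (ft t) x) 0 1).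
Proof.
  assert (HWf := W_pconv_joint_continuous f hf).
  assert (HWft := W_pconv_joint_continuous ft hft).
  assert (Hd : forall s y, is_derive (fun s => f s y * pconv W (f s) y) s
                 (ft s y * pconv W (f s) y + f s y * pconv W (ft s) y)).
  { intros s y. apply is_derive_Reals.
    apply (derivable_pt_lim_mult (fun s => f s y) (fun s => pconv W (f s) y));
      apply is_derive_Reals; [apply hfd|].
    apply (pconv_derive_param W W_continuous f ft y s hf hft hfd). }
  unfold energy. fold W.
  rewrite (RInt_ext (fun x => ft t x * pconv W (f t) x + f t x * pconv W (ft t) x)
             (fun x => Derive (fun s => f s x * pconv W (f s) x) t))
    by (intros y _; symmetry; apply is_derive_unique, Hd).
  apply (is_derive_RInt_param (fun s x => f s x * pconv W (f s) x)).
  - apply filter_forall. intros s y _. eexists; apply Hd.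
  - intros y _.
    apply continuity_2d_pt_ext
      with (f := fun s x => ft s x * pconv W (f s) x + f s x * pconv W (ft s) x).
    + intros; symmetry; apply is_derive_unique, Hd.
    + apply continuity_2d_pt_plus; apply continuity_2d_pt_mult; auto.
  - apply filter_forall. intros s. apply ex_RInt_of_continuous. intros x.
    apply (continuous_mult (K:=R_AbsRing)); [apply f_continuous|].
    apply (continuity_2d_pt_slice2 (fun s x => pconv W (f s) x)), HWf.
Qed.

(** The energy identity [E' = -2 D]: the two terms of the derivative agree by
    self-adjointness of [W *], and each equals [-D] by [transport_identity]. *)
Lemma energy_derive t : is_derive energy t (-2 * dissipation t).
Proof.
  assert (HWf : forall s x, continuous (pconv W (f s)) x)
    by (intros; apply pconv_continuous; [apply W_continuous | apply f_continuous]).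
  assert (HWft : forall s x, continuous (pconv W (ft s)) x)
    by (intros; apply pconv_continuous; [apply W_continuous | apply ft_continuous]).
  replace (-2 * dissipation t) with
    (RInt (fun x => ft t x * pconv W (f t) x + f t x * pconv W (ft t) x) 0 1).
  - apply energy_derive_under_integral.
  - rewrite RInt_plus_R.
    + rewrite (pconv_symmetric W W_continuous (f t) (ft t));
        auto using f_continuous, ft_continuous.
      * rewrite transport_identity. simpl. ring.
      * intros x. apply primitive_even; auto.
    + apply ex_RInt_of_continuous. intros x.
      apply (continuous_mult (K:=R_AbsRing)); auto using ft_continuous.
    + apply ex_RInt_of_continuous. intros x.
      apply (continuous_mult (K:=R_AbsRing)); auto using f_continuous.
Qed.

Variable T : R.
Hypothesis hpos : forall t x, 0 <= f t x.
Hypothesis hT : 0 < T.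
Hypothesis hper : forall t x, f (t + T) x = f t x.

Lemma dissipation_integrand_continuous t x :
  continuous (fun x => f t x * (pconv V (f t) x) ^ 2) x.
Proof.
  apply (continuous_mult (K:=R_AbsRing)); [apply f_continuous|].
  apply (continuous_comp (pconv V (f t)) (fun z => z ^ 2)).
  - apply pconv_continuous; auto; apply f_continuous.
  - apply continuity_pt_filterlim, derivable_continuous_pt, derivable_pt_pow.
Qed.

Lemma dissipation_integrand_nonneg t x : 0 <= f t x * (pconv V (f t) x) ^ 2.
Proof. apply Rmult_le_pos; [apply hpos | apply pow2_ge_0]. Qed.

(** [E] is nonincreasing ([E' = -2 D <= 0]) and [T]-periodic, so [E' = 0]. *)
Lemma dissipation_zero t : dissipation t = 0.
Proof.
  assert (Hmono : forall a b, a <= b -> energy b <= energy a).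
  { apply (nonincreasing_of_derive_nonpos energy (fun t => -2 * dissipation t)).
    - apply energy_derive.
    - intros s. enough (0 <= dissipation s) by lra.
      apply RInt_ge_0; [lra | | intros; apply dissipation_integrand_nonneg].
      apply ex_RInt_of_continuous, dissipation_integrand_continuous. }
  assert (Hperiodic : forall s, energy (s + T) = energy s).
  { intros s. unfold energy.
    replace (f (s + T)) with (f s) by (apply functional_extensionality; intros; auto).
    reflexivity. }
  assert (H := derive_periodic_nonincreasing energy T t _ hT Hperiodic Hmono (energy_derive t)).
  lra.
Qed.

(** Zero dissipation forces the flux to vanish on [[0,1]], hence everywhere. *)
Lemma flux_zero t x : flux t x = 0.
Proof.
  destruct (periodic1_reduce (flux t) (flux_periodic t) x) as [y [Hy ->]].
  assert (Hdiss := RInt_nonneg_zero (fun x => f t x * (pconv V (f t) x) ^ 2)).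
  assert (H0 : f t y * (pconv V (f t) y) ^ 2 = 0).
  { apply Hdiss; auto.
    - apply dissipation_integrand_continuous.
    - intros; apply dissipation_integrand_nonneg.
    - apply dissipation_zero. }
  (* [u^2 = f * (f (V * f)^2)] *)
  apply Rsqr_0_uniq. unfold Rsqr, flux.
  replace (pconv V (f t) y * f t y * (pconv V (f t) y * f t y))
    with (f t y * (f t y * pconv V (f t) y ^ 2)) by ring.
  rewrite H0. ring.
Qed.

(** [d_t f = d_x u = 0], so [f] does not depend on time. *)
Theorem periodic_solution_stationary t x : f t x = f 0 x.
Proof.
  assert (Hft0 : forall s y, ft s y = 0).
  { intros s y. rewrite <- (is_derive_unique _ _ _ (hsol s y)).
    rewrite (Derive_ext (flux s) (fun _ => 0)) by apply flux_zero.
    apply Derive_const. }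
  apply (derive_zero_constant (fun s => f s x)). intros s. rewrite <- (Hft0 s x). apply hfd.
Qed.
End Energy.

Lemma RInt01_RInt (g : R -> R) : ex_RInt g 0 1 -> RInt01 g = RInt g 0 1.
Proof.
  intros H. unfold RInt01. destruct excluded_middle_informative as [e|n].
  - symmetry. apply RInt_Reals.
  - exfalso. apply n. exists (ex_RInt_Reals_0 _ _ _ H). exact I.
Qed.

Theorem mainTheorem16
  (V : R -> R) (f ft fx : R -> R -> R) (T : R)
  (hVc : continuity V) (hVp : periodic1 V) (hVodd : forall x, V (- x) = - V x)
  (hfp : forall t, periodic1 (f t))
  (hf1 : C1_with_partials f ft fx)
  (hsol : solves_TP0 V f ft)
  (hpos : forall t x, 0 <= f t x)
  (hT : 0 < T) (hper : forall t x, f (t + T) x = f t x) :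
  forall t x, f t x = f 0 x.
Proof.
  destruct hf1 as [Hf [Hft [_ [Hfd _]]]].
  assert (HV : forall x, continuous V x) by (intros; apply continuity_pt_filterlim, hVc).
  assert (Hf2 := continuity_2d_pt_of_continuous2 f Hf).
  assert (Hft2 := continuity_2d_pt_of_continuous2 ft Hft).
  assert (Hfd2 : forall s y, is_derive (fun s => f s y) s (ft s y))
    by (intros; apply is_derive_Reals, Hfd).
  assert (Hsol2 : forall t x, is_derive (flux V f t) x (ft t x)).
  { intros t x. apply (is_derive_ext (fun y => conv V (f t) y * f t y)).
    - intros y. unfold conv, flux, pconv. rewrite RInt01_RInt; auto.
      apply pconv_ex_RInt; auto. intros z. apply continuity_2d_pt_slice2, Hf2.
    - apply is_derive_Reals, hsol. }
  exact (periodic_solution_stationary V f ft HV hVp hVodd hfp Hf2 Hft2 Hfd2 Hsol2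
           T hpos hT hper).
Qed.
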